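(* Let $r\ge 2$ be a constant, and let $k\ge 2r$ and $n\ge k$. Let $T(k)$ be the optimization time of the (1+1) EA with bit flip probability $1/n$ on $\mathrm{Fork}_{k,r}$ (bit strings of length $k$), where $\mathrm{Fork}_{k,r}(x)=k+1$ if $x=0^r1^{k-r}$, $k+2$ if $x=1^{k-r}0^r$, and $|x|_1$ otherwise. Then $E(T(k))\in\Theta(n^{2r})$.
   Context: The (1+1) EA with bit flip probability $1/n$ on strings of length $k$: start with $x$ uniform in $\{0,1\}^k$; each iteration create $y$ by flipping each bit of $x$ independently with probability $1/n$, set $x\gets y$ if $f(y)\ge f(x)$. Optimization time = number of iterations until the optimum $1^{k-r}0^r$ is the current solution. Asymptotics are with respect to $n\to\infty$. *)

From mathcomp Require Import all_boot all_order all_algebra.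
From mathcomp Require Import all_classical all_reals all_analysis.
Set Implicit Arguments. Unset Strict Implicit. Unset Printing Implicit Defensive.
Import Order.TTheory GRing.Theory Num.Theory.
Local Open Scope ring_scope.

Definition bits (k : nat) := {ffun 'I_k -> bool}.

Definition ones k (x : bits k) : nat := #|[set i | x i]|.

Definition forkA k r : bits k := [ffun i : 'I_k => (r <= i)%N].
Definition forkB k r : bits k := [ffun i : 'I_k => (i < k - r)%N].

Definition Fork k r (x : bits k) : nat :=
  if x == forkB k r then (k + 2)%N
  else if x == forkA k r then (k + 1)%N
  else ones x.

Section EA.
Variable R : realType.
Variables (n k r : nat).

Definition mutp (x y : bits k) : R :=
  \prod_(i < k) (if x i == y i then 1 - n%:R^-1 else n%:R^-1).

Definition trans (x y : bits k) : R :=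
  \sum_(z : bits k)
     mutp x z * (if (if (Fork r x <= Fork r z)%N then z else x) == y then 1 else 0).

(* surv t y = Pr[ the optimum has not been hit at times 0..t and x_t = y ] *)
Fixpoint surv (t : nat) (y : bits k) : R :=
  if y == forkB k r then 0 else
  match t with
  | 0 => (2 ^+ k)^-1
  | t'.+1 => \sum_(x : bits k) surv t' x * trans x y
  end.

Definition tailT (t : nat) : R := \sum_(y : bits k) surv t y.

(* E[T] = sum_{t >= 0} Pr[T > t]  (in the extended reals) *)
Definition ET : \bar R := (\sum_(0 <= t <oo) (tailT t)%:E)%E.
End EA.

(* Reversing a bit string is a symmetry of Fork on all strings other than the
   trap 0^r1^(k-r) and the optimum 1^(k-r)0^r, and it swaps these two; hence in every step the
   process is exactly as likely to fall into the trap as to jump to the optimum from elsewhere.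
   Writing p <= n^-2r for the probability of leaving the trap and S_M for the expected time
   spent in the trap before time M, this gives 2 p S_M + Pr[trap at M] + Pr[T > M] = 1.
   So either Pr[T > n^2r] > 1/4, or S_(n^2r) >= 1/(4p) >= n^2r/4; either way E[T] >= n^2r/4.

   With w = (1 - 1/n)^k >= e^-2, the potential that is 0 at the optimum,
   n^2r/w at the trap and (n^2r + n^r + (k - |x|_1) n)/w elsewhere never increases under the
   elitist selection and drops by at least 1 in expectation in every step before the optimum:
   from the trap flip its 2r wrong bits, from 1^k flip the last r bits, and otherwise flip a
   single zero bit.  Hence E[T] <= max potential <= 3 e^2 n^2r. *)

From Pilot Require Import Defs.
From mathcomp Require Import all_boot all_order all_algebra.
From mathcomp Require Import all_classical all_reals all_analysis.
From mathcomp Require Import zify ring lra.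
Set Implicit Arguments. Unset Strict Implicit. Unset Printing Implicit Defensive.
Import Order.TTheory GRing.Theory Num.Theory.
Local Open Scope ring_scope.

Lemma weighted_sum_le_sub1 (R : realFieldType) (T : finType) (p h : T -> R) G d z0 :
  (forall z, 0 <= p z) -> \sum_z p z = 1 ->
  (forall z, h z <= G) -> h z0 <= G - d -> 1 <= p z0 * d ->
  \sum_z p z * h z <= G - 1.
Proof.
move=> p_ge0 p_sum h_le hz0 pd; rewrite (bigD1 z0) //=.
have rest : \sum_(z | z != z0) p z = 1 - p z0.
  by rewrite -p_sum [in RHS](bigD1 z0) //= addrC addrK.
have le_rest : \sum_(z | z != z0) p z * h z <= (1 - p z0) * G.
  by rewrite -rest big_distrl /=; apply: ler_sum => z _; apply: ler_wpM2l.
have := ler_wpM2l (p_ge0 z0) hz0; lra.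
Qed.

Lemma nneseries_le_bound (R : realType) (u : nat -> R) (B : R) :
  (forall t, 0 <= u t) -> (forall M, \sum_(0 <= t < M) u t <= B) ->
  (\sum_(0 <= t <oo) (u t)%:E <= B%:E)%E.
Proof.
move=> u_ge0 le_B; apply: lime_le.
  by apply: is_cvg_nneseries => t _ _; rewrite lee_fin.
by apply: nearW => M /=; rewrite sumEFin lee_fin.
Qed.

Lemma nneseries_ge_partial (R : realType) (u : nat -> R) (B : R) M :
  (forall t, 0 <= u t) -> B <= \sum_(0 <= t < M) u t ->
  (B%:E <= \sum_(0 <= t <oo) (u t)%:E)%E.
Proof.
move=> u_ge0 le_B; apply: le_trans (nneseries_lim_ge M _).
  by rewrite sumEFin lee_fin.
by move=> t _ _; rewrite lee_fin.
Qed.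

Section BitStrings.
Variable k : nat.
Implicit Types x y z : bits k.

Definition revb x : bits k := [ffun i => x (rev_ord i)].

Lemma revbK : involutive revb.
Proof. by move=> x; apply/ffunP => i; rewrite !ffunE rev_ordK. Qed.

Lemma revb_inj : injective revb.
Proof. exact: inv_inj revbK. Qed.

Lemma ones_revb x : ones (revb x) = ones x.
Proof.
rewrite /ones -[RHS](card_preimset _ (@rev_ord_inj k)).
by apply: eq_card => i; rewrite !inE ffunE.
Qed.

Lemma ones_le x : (ones x <= k)%N.
Proof. by rewrite /ones -[X in (_ <= X)%N]card_ord max_card. Qed.

Lemma ones_full x : (forall i, x i) -> ones x = k.
Proof.
move=> x_full; rewrite /ones -[RHS]card_ord -cardsT.
by apply: eq_card => i; rewrite !inE x_full.
Qed.

Definition set1b x i : bits k := [ffun j => (j == i) || x j].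

Lemma ones_set1b x i : ~~ x i -> ones (set1b x i) = (ones x).+1.
Proof.
move=> xi; rewrite /ones; have := cardsU1 i [set j | x j].
by rewrite inE xi add1n => <-; apply: eq_card => j; rewrite !inE ffunE.
Qed.

Lemma ones_lt x i : ~~ x i -> (ones x < k)%N.
Proof. by move=> xi; rewrite -(ones_set1b xi) ones_le. Qed.

Definition hamming x y : nat := \sum_(i < k) (x i != y i).

Lemma revb_forkA r : revb (forkA k r) = forkB k r.
Proof.
apply/ffunP => i; rewrite !ffunE /=; have := ltn_ord i.
by move=> ?; apply/idP/idP; lia.
Qed.

Lemma revb_forkB r : revb (forkB k r) = forkA k r.
Proof. by rewrite -revb_forkA revbK. Qed.

Lemma hamming_forkAB r : (2 * r <= k)%N -> hamming (forkA k r) (forkB k r) = (2 * r)%N.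
Proof.
move=> rk; pose d (i : nat) := ((r <= i)%N != (i < k - r)%N : nat).
rewrite /hamming (eq_bigr (fun i : 'I_k => d i)); last by move=> i _; rewrite !ffunE.
rewrite -(big_mkord xpredT d) (big_cat_nat _ (n := r)) //=; last by lia.
rewrite (big_cat_nat _ (m := r) (n := k - r)) //=; try lia.
rewrite (eq_big_nat _ _ (F2 := fun=> 1%N)); last by move=> i ?; rewrite /d; lia.
rewrite [X in (_ + (X + _))%N](eq_big_nat _ _ (F2 := fun=> 0%N)); last first.
  by move=> i ?; rewrite /d; lia.
rewrite [X in (_ + (_ + X))%N](eq_big_nat _ _ (F2 := fun=> 1%N)); last first.
  by move=> i ?; rewrite /d; lia.
rewrite !sum_nat_const_nat; lia.
Qed.

Lemma hamming_full_forkB x r : (r <= k)%N -> (forall i, x i) ->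
  hamming x (forkB k r) = r.
Proof.
move=> rk x_full; pose d (i : nat) := (~~ (i < k - r)%N : nat).
rewrite /hamming (eq_bigr (fun i : 'I_k => d i)); last first.
  by move=> i _; rewrite !ffunE x_full.
rewrite -(big_mkord xpredT d) (big_cat_nat _ (n := k - r)) //=; last by lia.
rewrite (eq_big_nat _ _ (F2 := fun=> 0%N)); last by move=> i ?; rewrite /d; lia.
rewrite [X in (_ + X)%N](eq_big_nat _ _ (F2 := fun=> 1%N)); last first.
  by move=> i ?; rewrite /d; lia.
rewrite !sum_nat_const_nat; lia.
Qed.

End BitStrings.

Section Mutation.
Variables (R : realType) (n k : nat).
Implicit Types x y z : bits k.
Local Notation q := (n%:R^-1 : R).

Lemma rate_ge0 : 0 <= q.
Proof. by rewrite invr_ge0. Qed.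

Lemma rate_le1 : q <= 1.
Proof. by case: n => [|m]; rewrite ?invr0 // invf_le1 ?ler1n ?ltr0n. Qed.

Lemma mutp_hamming x y :
  mutp R n x y = q ^+ hamming x y * (1 - q) ^+ (k - hamming x y).
Proof.
have agree : (\sum_(i < k) (x i == y i) = k - hamming x y)%N.
  apply/eqP; rewrite -(eqn_add2r (hamming x y)) subnK; last first.
    by rewrite -[X in (_ <= X)%N]card_ord -sum1_card leq_sum // => i _; case: eqP.
  rewrite -big_split /= -[X in _ == X]card_ord -sum1_card.
  by apply/eqP/eq_bigr => i _; case: eqP.
rewrite /mutp -agree /hamming -!prodrXr -big_split /=.
by apply: eq_bigr => i _; case: eqP; rewrite ?mulr1 ?mul1r.
Qed.

Lemma mutp_ge0 x y : 0 <= mutp R n x y.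
Proof.
have q_ge0 := rate_ge0; have q_le1 := rate_le1.
by rewrite mutp_hamming; apply: mulr_ge0; apply: exprn_ge0; lra.
Qed.

Lemma mutp_sum1 x : \sum_z mutp R n x z = 1.
Proof.
rewrite /mutp -(bigA_distr_bigA (fun i b => if x i == b then 1 - q else q)).
by rewrite big1 // => i _; rewrite big_bool /=; case: (x i) => /=; ring.
Qed.

Lemma mutp_revb x y : mutp R n (revb x) (revb y) = mutp R n x y.
Proof.
rewrite /mutp [RHS](reindex_inj (@rev_ord_inj k)) /=.
by apply: eq_bigr => i _; rewrite !ffunE.
Qed.

Lemma mutp_set1b_ge x i : ~~ x i -> q * (1 - q) ^+ k <= mutp R n x (set1b x i).
Proof.
move=> xi; rewrite /mutp (bigD1 i) //= !ffunE eqxx (negbTE xi) /=.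
apply: ler_wpM2l; first exact: rate_ge0.
rewrite (eq_bigr (fun=> 1 - q)); last by move=> j /negbTE ji; rewrite !ffunE ji eqxx.
have q_ge0 := rate_ge0; have q_le1 := rate_le1.
rewrite prodr_const; apply: ler_wiXn2l; try lra.
by rewrite -[X in (_ <= X)%N]card_ord max_card.
Qed.

End Mutation.

Definition noflip (R : realType) n k : R := (1 - n%:R^-1) ^+ k.

Section NoFlip.
Variables (R : realType) (n : nat).
Hypothesis n_ge2 : (2 <= n)%N.
Local Notation q := (n%:R^-1 : R).

Lemma rate_gt0 : 0 < q.
Proof. by rewrite invr_gt0 ltr0n; lia. Qed.

Lemma rate_le_half : q <= 2^-1.
Proof. by rewrite lef_pV2 ?posrE ?ltr0n ?ler_nat //; lia. Qed.

Lemma rate_exprK m : q ^+ m * n%:R ^+ m = 1.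
Proof. by rewrite -exprMn mulVf ?expr1n // pnatr_eq0; lia. Qed.

Lemma noflip_gt0 k : 0 < noflip R n k.
Proof. by apply: exprn_gt0; have := rate_le_half; lra. Qed.

Lemma noflip_le_expr k e : (e <= k)%N -> noflip R n k <= (1 - q) ^+ e.
Proof.
by move=> ek; apply: ler_wiXn2l => //; have := rate_gt0; have := rate_le_half; lra.
Qed.

Lemma noflip_ratio_ge1 k e : (e <= k)%N -> 1 <= (1 - q) ^+ e / noflip R n k.
Proof. by move=> ek; rewrite ler_pdivlMr ?noflip_gt0 // mul1r noflip_le_expr. Qed.

Lemma noflip_expR2_ge1 k : (k <= n)%N -> 1 <= noflip R n k * expR 2.
Proof.
move=> kn; have q_gt0 := rate_gt0; have q_le := rate_le_half.
apply: le_trans (_ : (1 - q) ^+ n * expR 2 <= _); last first.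
  by apply: ler_wpM2r; [exact: ltW (expR_gt0 _)|exact: noflip_le_expr].
have -> : (2 : R) = (2 * q) * n%:R by rewrite -mulrA mulVf ?mulr1 // pnatr_eq0; lia.
rewrite expRM_natr -exprMn; apply: exprn_ege1.
have := expR_ge1Dx (2 * q); have : 0 <= (1 - q) * (1 + 2 * q) - 1 by nra.
move=> *; apply: le_trans (_ : (1 - q) * (1 + 2 * q) <= _); first lra.
by apply: ler_wpM2l; lra.
Qed.

End NoFlip.

Section Landscape.
Variables k r : nat.
Implicit Types x y z : bits k.

Definition regular x := (x != forkA k r) && (x != forkB k r).

Definition ea_next x z : bits k := if (Fork r x <= Fork r z)%N then z else x.

Lemma Fork_forkB : Fork r (forkB k r) = (k + 2)%N.
Proof. by rewrite /Fork eqxx. Qed.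

Lemma Fork_regular x : regular x -> Fork r x = ones x.
Proof. by case/andP => /negbTE xA /negbTE xB; rewrite /Fork xA xB. Qed.

Lemma ones_le_Fork x : (ones x <= Fork r x)%N.
Proof. by have := ones_le x; rewrite /Fork; case: ifP => _; [|case: ifP => _]; lia. Qed.

Lemma regular_revb x : regular (revb x) = regular x.
Proof.
have revb_eq y : (revb x == y) = (x == revb y).
  by rewrite -{1}(revbK y) (inj_eq (@revb_inj k)).
by rewrite /regular !revb_eq revb_forkA revb_forkB andbC.
Qed.

Hypotheses (r_gt0 : (0 < r)%N) (r_le : (2 * r <= k)%N).

Lemma forkA_neq_forkB : forkA k r != forkB k r.
Proof.
have k_gt0 : (0 < k)%N by lia.
apply/eqP => /ffunP/(_ (Ordinal k_gt0)); rewrite !ffunE /=.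
by case: r r_gt0 r_le => // r' _ ?; rewrite ltn0 subn_gt0; lia.
Qed.

Lemma Fork_forkA : Fork r (forkA k r) = (k + 1)%N.
Proof. by rewrite /Fork (negbTE forkA_neq_forkB) eqxx. Qed.

Lemma ea_next_forkA z :
  ea_next (forkA k r) z = if z == forkB k r then forkB k r else forkA k r.
Proof.
rewrite /ea_next Fork_forkA; case: (z =P forkB k r) => [->|/eqP zB].
  by rewrite Fork_forkB leq_add2l.
case: (z =P forkA k r) => [->|/eqP zA]; first by case: ifP.
rewrite Fork_regular /regular ?zA ?zB //.
by have := ones_le z; case: ifP => //; lia.
Qed.

Lemma ea_next_special x z : regular x -> ~~ regular z -> ea_next x z = z.
Proof.
move=> x_reg; rewrite negb_and !negbK /ea_next Fork_regular //.
case/orP => /eqP ->; rewrite ?Fork_forkA ?Fork_forkB;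
  by have := ones_le x; case: ifP => //; lia.
Qed.

Lemma ea_next_revb x z : regular x -> ea_next (revb x) (revb z) = revb (ea_next x z).
Proof.
move=> x_reg; have rx_reg : regular (revb x) by rewrite regular_revb.
have [z_reg|z_sp] := boolP (regular z); last first.
  by rewrite !ea_next_special // regular_revb.
by rewrite /ea_next !Fork_regular ?regular_revb // !ones_revb; case: ifP.
Qed.

End Landscape.

Section Chain.
Variables (R : realType) (n k r : nat).
Hypotheses (r_gt0 : (0 < r)%N) (r_le : (2 * r <= k)%N).
Implicit Types x y z : bits k.
Local Notation A := (forkA k r).
Local Notation B := (forkB k r).
Local Notation trans := (trans R n r).
Local Notation surv := (surv R n r).
Local Notation tail := (tailT R n k r).
Local Notation pAB := (mutp R n A B).

Lemma trans_sum x (h : bits k -> R) :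
  \sum_y trans x y * h y = \sum_z mutp R n x z * h (ea_next r x z).
Proof.
under eq_bigr do rewrite big_distrl /=.
rewrite exchange_big /=; apply: eq_bigr => z _.
rewrite (bigD1 (ea_next r x z)) //= eqxx mulr1 big1 ?addr0 // => y /negbTE.
by rewrite eq_sym => ->; rewrite mulr0 mul0r.
Qed.

Lemma trans_ge0 x y : 0 <= trans x y.
Proof. by apply: sumr_ge0 => z _; apply: mulr_ge0; [exact: mutp_ge0|case: ifP]. Qed.

Lemma trans_sum1 x : \sum_y trans x y = 1.
Proof.
have := trans_sum x (fun=> 1); under eq_bigr do rewrite mulr1; move=> ->.
by under eq_bigr do rewrite mulr1; exact: mutp_sum1.
Qed.

Lemma surv_forkB t : surv t B = 0.
Proof. by case: t => [|t] /=; rewrite eqxx. Qed.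

Lemma surv_ge0 t y : 0 <= surv t y.
Proof.
elim: t y => [|t IH] y /=; case: ifP => // _.
by apply: sumr_ge0 => x _; apply: mulr_ge0 => //; exact: trans_ge0.
Qed.

Lemma tail_ge0 t : 0 <= tail t.
Proof. by apply: sumr_ge0 => y _; exact: surv_ge0. Qed.

Lemma surv_forkA_le_tail t : surv t A <= tail t.
Proof.
rewrite /tailT (bigD1 A) //= lerDl.
by apply: sumr_ge0 => x _; exact: surv_ge0.
Qed.

Lemma surv_succ t y : y != B -> surv t.+1 y = \sum_x surv t x * trans x y.
Proof. by move=> /negbTE /= ->. Qed.

Lemma sum_surv_split t (f : bits k -> R) :
  \sum_x surv t x * f x = surv t A * f A + \sum_(x | regular r x) surv t x * f x.
Proof.
rewrite (bigD1 A) //=; congr (_ + _).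
rewrite (bigD1 B) /=; last by rewrite eq_sym forkA_neq_forkB.
by rewrite surv_forkB mul0r add0r; apply: eq_bigl => x; rewrite /regular.
Qed.

Lemma trans_forkA y :
  trans A y = \sum_z mutp R n A z * (if (if z == B then B else A) == y then 1 else 0).
Proof. by apply: eq_bigr => z _; rewrite -ea_next_forkA. Qed.

Lemma trans_forkA_regular y : regular r y -> trans A y = 0.
Proof.
case/andP => yA yB; rewrite trans_forkA big1 // => z _.
by case: (z == B); rewrite eq_sym ?(negbTE yA) ?(negbTE yB) mulr0.
Qed.

Lemma trans_forkAB : trans A B = pAB.
Proof.
rewrite trans_forkA (bigD1 B) //= !eqxx mulr1 big1 ?addr0 // => z /negbTE ->.
by rewrite (negbTE (forkA_neq_forkB r_gt0 r_le)) mulr0.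
Qed.

Lemma trans_forkAA : trans A A = 1 - pAB.
Proof.
rewrite trans_forkA (bigD1 B) //= eqxx eq_sym (negbTE (forkA_neq_forkB r_gt0 r_le)).
rewrite mulr0 add0r (eq_bigr (mutp R n A)); last first.
  by move=> z /negbTE ->; rewrite /= eqxx mulr1.
by have := mutp_sum1 R n A; rewrite (bigD1 B) //= => <-; rewrite [RHS]addrC addKr.
Qed.

Lemma trans_revb x y : regular r x -> trans (revb x) (revb y) = trans x y.
Proof.
move=> x_reg; rewrite /Defs.trans (reindex_inj (@revb_inj k)) /=.
apply: eq_bigr => z _; rewrite mutp_revb.
have := ea_next_revb r_gt0 r_le z x_reg; rewrite /ea_next => ->.
by rewrite (inj_eq (@revb_inj k)).
Qed.

Lemma surv_revb t y : regular r y -> surv t (revb y) = surv t y.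
Proof.
elim: t y => [|t IH] y y_reg; have ry_reg : regular r (revb y) by rewrite regular_revb.
  by case/andP: y_reg => _ /negbTE /= ->; case/andP: ry_reg => _ /negbTE ->.
rewrite !surv_succ; [|by case/andP: y_reg|by case/andP: ry_reg].
rewrite !sum_surv_split !trans_forkA_regular // !mulr0 !add0r.
rewrite (reindex_inj (@revb_inj k)) /=.
apply: eq_big => [x|x]; first by rewrite regular_revb.
by rewrite regular_revb => x_reg; rewrite IH // trans_revb.
Qed.

Definition inflow t y := \sum_(x | regular r x) surv t x * trans x y.

Lemma inflow_forkB t : inflow t B = inflow t A.
Proof.
rewrite /inflow (reindex_inj (@revb_inj k)) /=.
apply: eq_big => [x|x]; first by rewrite regular_revb.
by rewrite regular_revb => x_reg; rewrite -revb_forkA trans_revb // surv_revb.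
Qed.

Lemma surv_forkA_succ t : surv t.+1 A = (1 - pAB) * surv t A + inflow t A.
Proof.
by rewrite surv_succ ?forkA_neq_forkB // sum_surv_split trans_forkAA mulrC.
Qed.

Lemma tail_succ t : tail t.+1 = tail t - pAB * surv t A - inflow t A.
Proof.
have flow : \sum_(y : bits k) \sum_(x : bits k) surv t x * trans x y = tail t.
  rewrite exchange_big; apply: eq_bigr => x _.
  by rewrite -big_distrr /= trans_sum1 mulr1.
have -> : tail t.+1 = \sum_(y : bits k) \sum_(x : bits k) surv t x * trans x y
                      - \sum_(x : bits k) surv t x * trans x B.
  rewrite /tailT [LHS](bigD1 B) // [X in X - _](bigD1 B) //= eqxx add0r.
  by rewrite [X in X - _]addrC addrK; apply: eq_bigr => y; exact: surv_succ.
rewrite flow sum_surv_split -/(inflow t B) inflow_forkB trans_forkAB.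
by rewrite opprD addrA mulrC.
Qed.

Lemma tail_nonincreasing : nonincreasing_seq tail.
Proof.
apply/nonincreasing_seqP => t; rewrite tail_succ -addrA gerDl -opprD oppr_le0.
apply: addr_ge0; first by apply: mulr_ge0; [exact: mutp_ge0|exact: surv_ge0].
by apply: sumr_ge0 => x _; apply: mulr_ge0; [exact: surv_ge0|exact: trans_ge0].
Qed.

Lemma surv0_forkA_add_tail0 : surv 0 A + tail 0 = 1.
Proof.
have uniform : \sum_(y : bits k) (2 ^+ k)^-1 = 1 :> R.
  rewrite sumr_const card_ffun card_bool card_ord.
  by rewrite -[_ *+ (2 ^ k)%N]mulr_natr natrX mulVf // expf_neq0.
rewrite /tailT -uniform (bigD1 B) // [RHS](bigD1 B) //= eqxx add0r.
rewrite (negbTE (forkA_neq_forkB r_gt0 r_le)); congr (_ + _).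
by apply: eq_bigr => y /negbTE ->.
Qed.

Definition occupation M := \sum_(0 <= t < M) surv t A.

Lemma mass_balance M : 2 * pAB * occupation M + surv M A + tail M = 1.
Proof.
elim: M => [|M IH].
  by rewrite /occupation big_geq // mulr0 add0r surv0_forkA_add_tail0.
have -> : occupation M.+1 = occupation M + surv M A by rewrite /occupation big_nat_recr.
by rewrite surv_forkA_succ tail_succ -[RHS]IH; ring.
Qed.

Lemma mutp_forkAB_le : pAB <= n%:R^-1 ^+ (2 * r).
Proof.
rewrite mutp_hamming hamming_forkAB // -[X in _ <= X]mulr1.
apply: ler_wpM2l; first exact/exprn_ge0/rate_ge0.
by apply: exprn_ile1; have := rate_le1 R n; have := rate_ge0 R n; lra.
Qed.

Lemma occupation_lower M : (2 <= n)%N -> tail M <= 4^-1 ->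
  n%:R ^+ (2 * r) / 4 <= occupation M.
Proof.
move=> n_ge2 tail_small; set N := n%:R ^+ (2 * r); pose Q : R := n%:R^-1 ^+ (2 * r).
have occ_ge0 : 0 <= occupation M by apply: sumr_ge0 => t _; exact: surv_ge0.
have half : 2^-1 <= 2 * Q * occupation M.
  apply: le_trans (_ : 2 * pAB * occupation M <= _).
    by have := mass_balance M; have := surv_forkA_le_tail M; lra.
  by apply: ler_wpM2r => //; apply: ler_wpM2l => //; exact: mutp_forkAB_le.
have := ler_wpM2l (exprn_ge0 (2 * r) (ler0n R n)) half; rewrite -/N.
have -> : N * (2 * Q * occupation M) = 2 * occupation M * (Q * N) by ring.
by rewrite rate_exprK // mulr1; lra.
Qed.

Lemma sum_tail_lower : (2 <= n)%N ->
  n%:R ^+ (2 * r) / 4 <= \sum_(0 <= t < n ^ (2 * r)) tail t.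
Proof.
move=> n_ge2; set L := (n ^ (2 * r))%N.
have [tail_small|tail_large] := leP (tail L) (4^-1).
  apply: le_trans (occupation_lower n_ge2 tail_small) _.
  by apply: ler_sum => t _; exact: surv_forkA_le_tail.
apply: le_trans (_ : \sum_(0 <= t < L) (4^-1 : R) <= _).
  by rewrite sumr_const_nat subn0 -[_ *+ L]mulr_natr natrX mulrC.
apply: ler_sum_nat => t /andP[_ tL]; apply: le_trans (ltW tail_large) _.
exact/tail_nonincreasing/ltnW.
Qed.

End Chain.

Section Drift.
Variables (R : realType) (n k r : nat).
Hypotheses (n_ge2 : (2 <= n)%N) (r_gt0 : (0 < r)%N) (r_le : (2 * r <= k)%N).
Implicit Types x y z : bits k.
Local Notation A := (forkA k r).
Local Notation B := (forkB k r).
Local Notation q := (n%:R^-1 : R).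
Local Notation w := (noflip R n k).
Local Notation N := (n%:R ^+ (2 * r) : R).

Definition pot_level (m : nat) : R := (N + n%:R ^+ r + m%:R * n%:R) / w.

Definition pot x : R :=
  if x == B then 0 else if x == A then N / w else pot_level (k - ones x).

Lemma pot_level_ge_forkA m : N / w <= pot_level m.
Proof.
apply: ler_wpM2r; first by rewrite invr_ge0 ltW ?noflip_gt0.
by rewrite -addrA lerDl; apply: addr_ge0; [exact: exprn_ge0|exact: mulr_ge0].
Qed.

Lemma pot_level_le m1 m2 : (m1 <= m2)%N -> pot_level m1 <= pot_level m2.
Proof.
move=> m12; apply: ler_wpM2r; first by rewrite invr_ge0 ltW ?noflip_gt0.
by rewrite lerD2l ler_wpM2r // ler_nat.
Qed.

Lemma pot_levelS m : pot_level m.+1 = pot_level m + n%:R / w.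
Proof. by rewrite /pot_level -natr1; ring. Qed.

Lemma pot_level_ge0 m : 0 <= pot_level m.
Proof.
apply: divr_ge0; last exact/ltW/noflip_gt0.
by apply: addr_ge0; [apply: addr_ge0; exact: exprn_ge0|apply: mulr_ge0].
Qed.

Lemma pot_ge0 x : 0 <= pot x.
Proof.
rewrite /pot; case: ifP => // _; case: ifP => _; last exact: pot_level_ge0.
by apply: divr_ge0; [exact: exprn_ge0|exact/ltW/noflip_gt0].
Qed.

Lemma pot_le_level x : pot x <= pot_level (k - ones x).
Proof.
rewrite /pot; case: ifP => _; first exact: pot_level_ge0.
by case: ifP => _; [exact: pot_level_ge_forkA|].
Qed.

Lemma pot_le_max x : pot x <= pot_level k.
Proof. exact/(le_trans (pot_le_level x))/pot_level_le/leq_subr. Qed.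

Lemma pot_regular x : regular r x -> pot x = pot_level (k - ones x).
Proof. by case/andP => /negbTE xA /negbTE xB; rewrite /pot xA xB. Qed.

Lemma pot_ea_next_le x z : regular r x -> pot (ea_next r x z) <= pot x.
Proof.
move=> x_reg; rewrite /ea_next; case: ifP => // le_Fork.
rewrite (pot_regular x_reg) /pot; case: ifP => zB; first exact: pot_level_ge0.
case: ifP => zA; first exact: pot_level_ge_forkA.
have z_reg : regular r z by rewrite /regular zA zB.
by apply/pot_level_le/leq_sub2l; move: le_Fork; rewrite !Fork_regular.
Qed.

Lemma pot_drift_forkA :
  \sum_z mutp R n A z * pot (ea_next r A z) <= pot A - 1.
Proof.
have potA : pot A = N / w by rewrite /pot (negbTE (forkA_neq_forkB r_gt0 r_le)) eqxx.
apply: (weighted_sum_le_sub1 (d := N / w) (z0 := B)).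
- exact: mutp_ge0.
- exact: mutp_sum1.
- move=> z; rewrite ea_next_forkA //; case: ifP => _ //.
  by rewrite [X in X <= _]/pot eqxx pot_ge0.
- by rewrite ea_next_forkA // eqxx potA subrr /pot eqxx.
rewrite mutp_hamming hamming_forkAB //.
have -> : q ^+ (2 * r) * (1 - q) ^+ (k - 2 * r) * (N / w) =
          (1 - q) ^+ (k - 2 * r) / w * (q ^+ (2 * r) * N) by ring.
by rewrite rate_exprK // mulr1 noflip_ratio_ge1 // leq_subr.
Qed.

Lemma pot_drift_full x : regular r x -> (forall i, x i) ->
  \sum_z mutp R n x z * pot (ea_next r x z) <= pot x - 1.
Proof.
move=> x_reg x_full.
have B_sp : ~~ regular r B by rewrite /regular eqxx andbF.
apply: (weighted_sum_le_sub1 (d := pot x) (z0 := B)).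
- exact: mutp_ge0.
- exact: mutp_sum1.
- by move=> z; exact: pot_ea_next_le.
- by rewrite ea_next_special // subrr /pot eqxx.
rewrite mutp_hamming hamming_full_forkB //; last by lia.
rewrite (pot_regular x_reg) ones_full // subnn /pot_level.
apply: le_trans (_ : (1 - q) ^+ (k - r) / w * (q ^+ r * n%:R ^+ r) <= _).
  by rewrite rate_exprK // mulr1 noflip_ratio_ge1 // leq_subr.
have -> : q ^+ r * (1 - q) ^+ (k - r) * ((N + n%:R ^+ r + 0%:R * n%:R) / w) =
          (1 - q) ^+ (k - r) / w * (q ^+ r * N + q ^+ r * n%:R ^+ r) by ring.
apply: ler_wpM2l.
  apply: divr_ge0; last exact/ltW/noflip_gt0.
  by apply: exprn_ge0; have := rate_le_half R n_ge2; lra.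
by rewrite lerDr; apply: mulr_ge0; apply: exprn_ge0; [exact: rate_ge0|].
Qed.

Lemma pot_drift_set1b x i : regular r x -> ~~ x i ->
  \sum_z mutp R n x z * pot (ea_next r x z) <= pot x - 1.
Proof.
move=> x_reg xi; set z0 := set1b x i.
have next_z0 : ea_next r x z0 = z0.
  rewrite /ea_next Fork_regular //.
  by have := ones_le_Fork r z0; rewrite ones_set1b // => /ltnW ->.
apply: (weighted_sum_le_sub1 (d := n%:R / w) (z0 := z0)).
- exact: mutp_ge0.
- exact: mutp_sum1.
- by move=> z; exact: pot_ea_next_le.
- rewrite next_z0 (pot_regular x_reg); apply: le_trans (pot_le_level z0) _.
  have -> : (k - ones x = (k - ones z0).+1)%N.
    by rewrite ones_set1b //; have := ones_lt xi; lia.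
  by rewrite pot_levelS addrK.
apply: le_trans (_ : q * w * (n%:R / w) <= _).
  have -> : q * w * (n%:R / w) = q * n%:R * (w / w) by ring.
  have := rate_exprK R n_ge2 1; rewrite !expr1 => ->.
  by rewrite mulfV ?mul1r // gt_eqF // noflip_gt0.
apply: ler_wpM2r; last exact: mutp_set1b_ge.
by apply: divr_ge0; [exact: ler0n|exact/ltW/noflip_gt0].
Qed.

Lemma pot_drift x : x != B ->
  \sum_z mutp R n x z * pot (ea_next r x z) <= pot x - 1.
Proof.
move=> xB; have [->|xA] := eqVneq x A; first exact: pot_drift_forkA.
have x_reg : regular r x by rewrite /regular xA xB.
have [x_full|] := boolP [forall i, x i]; first exact/pot_drift_full/forallP.
by case/forallPn => i xi; exact: pot_drift_set1b xi.
Qed.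

Local Notation surv := (surv R n r).
Local Notation tail := (tailT R n k r).

Definition pot_mass t := \sum_y surv t y * pot y.

Lemma pot_mass_succ t : pot_mass t.+1 + tail t <= pot_mass t.
Proof.
have -> : pot_mass t.+1 = \sum_x surv t x * \sum_y trans R n r x y * pot y.
  rewrite /pot_mass (eq_bigr (fun y => (\sum_x surv t x * trans R n r x y) * pot y)).
    under eq_bigr do rewrite big_distrl /=.
    rewrite exchange_big /=; apply: eq_bigr => x _.
    by rewrite big_distrr /=; apply: eq_bigr => y _; rewrite mulrA.
  move=> y _; have [->|yB] := eqVneq y B; first by rewrite /pot eqxx !mulr0.
  by rewrite surv_succ.
rewrite -lerBrDr /pot_mass /tailT -sumrB; apply: ler_sum => x _.
have [->|xB] := eqVneq x B; first by rewrite surv_forkB !mul0r subr0.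
rewrite -[X in _ * _ - X]mulr1 -mulrBr; apply: ler_wpM2l; first exact: surv_ge0.
by rewrite trans_sum; exact: pot_drift.
Qed.

Lemma sum_tail_upper M : \sum_(0 <= t < M) tail t <= pot_level k.
Proof.
have pot_mass_ge0 t : 0 <= pot_mass t.
  by apply: sumr_ge0 => y _; apply: mulr_ge0; [exact: surv_ge0|exact: pot_ge0].
have pot_mass0 : pot_mass 0 <= pot_level k.
  apply: le_trans (_ : tail 0 * pot_level k <= _).
    rewrite /pot_mass /tailT big_distrl; apply: ler_sum => y _.
    by apply: ler_wpM2l; [exact: surv_ge0|exact: pot_le_max].
  have := surv0_forkA_add_tail0 R n r_gt0 r_le; have := surv_ge0 R n r 0 A.
  by move=> *; apply: ler_piMl; [exact: pot_level_ge0|lra].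
suff : \sum_(0 <= t < M) tail t + pot_mass M <= pot_mass 0.
  by have := pot_mass_ge0 M; lra.
elim: M => [|M IH]; first by rewrite big_geq // add0r.
by rewrite big_nat_recr //=; apply: le_trans IH; have := pot_mass_succ M; lra.
Qed.

Lemma pot_level_le_expR2 : (k <= n)%N -> pot_level k <= 3 * expR 2 * N.
Proof.
move=> kn; have w_gt0 := noflip_gt0 R n_ge2 k.
have nr_le : n%:R ^+ r <= N by rewrite -!natrX ler_nat leq_pexp2l //; lia.
have kn_le : k%:R * n%:R <= N.
  rewrite -natrM -natrX ler_nat (leq_trans (leq_mul kn (leqnn n))) //.
  by rewrite -[(n * n)%N]/(n ^ 2)%N leq_pexp2l //; lia.
have N_ge0 : 0 <= N by exact: exprn_ge0.
apply: le_trans (_ : 3 * N / w <= _).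
  by apply: ler_wpM2r; [rewrite invr_ge0 ltW|lra].
rewrite ler_pdivrMr //.
have N3_ge0 : 0 <= 3 * N by lra.
have := ler_wpM2l N3_ge0 (noflip_expR2_ge1 R n_ge2 kn).
by rewrite mulr1 (_ : 3 * N * (w * expR 2) = 3 * expR 2 * N * w) //; ring.
Qed.

End Drift.

Theorem theorem2 (R : realType) (r : nat) (hr : (2 <= r)%N) :
  exists (c C : R) (N : nat), 0 < c /\ 0 < C /\
    forall n k : nat, (N <= n)%N -> (2 * r <= k)%N -> (k <= n)%N ->
      ((c * n%:R ^+ (2 * r))%:E <= ET R n k r /\
       ET R n k r <= (C * n%:R ^+ (2 * r))%:E)%E.
Proof.
exists 4^-1, (3 * expR 2), 2%N; split; first by rewrite invr_gt0.
split; first by rewrite mulr_gt0 ?expR_gt0.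
move=> n k n_ge2 r_le kn; have r_gt0 : (0 < r)%N by lia.
split.
  apply: (nneseries_ge_partial (M := (n ^ (2 * r))%N)); first exact: tail_ge0.
  by rewrite mulrC; exact: sum_tail_lower.
apply: nneseries_le_bound; first exact: tail_ge0.
move=> M; apply: le_trans (pot_level_le_expR2 R n_ge2 r_gt0 r_le kn).
exact: sum_tail_upper.
Qed.
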